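(* Let $d\in\mathbb{N}$ and let $\mathcal{P}$ be a partition of $\mathbb{R}^{d}$ with the adjacent-or-far property. Suppose there exists $D\in(0,\infty)$ such that $\operatorname{diam}(X)<D$ for all $X\in\mathcal{P}$. Then $\mathcal{P}$ contains a $(d+1)$-clique.
   Context: On $\mathbb{R}^d$ use $d_{max}(\vec{x},\vec{y})=\max_i|x_i-y_i|$ and $\operatorname{diam}(X)=\sup\{d_{max}(\vec{x},\vec{y}):\vec{x},\vec{y}\in X\}$. Members $X,Y$ of $\mathcal{P}$ are adjacent if $\overline{X}\cap\overline{Y}\neq\emptyset$ (closures); an $n$-clique is a set of $n$ distinct pairwise adjacent members. $\mathcal{P}$ has the adjacent-or-far property if there exists $\epsilon\in(0,\infty)$ such that for all $X,Y\in\mathcal{P}$, either $X$ and $Y$ are adjacent or $d_{max}(\vec{x},\vec{y})>\epsilon$ for all $\vec{x}\in X$, $\vec{y}\in Y$. *)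

From HB Require Import structures.
From mathcomp Require Import all_boot all_order all_algebra.
From mathcomp Require Import all_classical all_reals.
From mathcomp Require Import ereal.
Set Implicit Arguments. Unset Strict Implicit. Unset Printing Implicit Defensive.
Import Order.TTheory GRing.Theory Num.Theory.
Local Open Scope classical_set_scope.
Local Open Scope ring_scope.

Section Defs.
Variables (R : realType) (d : nat).
Notation pt := ('I_d -> R).

Definition dmax (x y : pt) : R := \big[Num.max/0]_(i < d) `|x i - y i|.

Definition diam (X : set pt) : \bar R :=
  ereal_sup [set (dmax xy.1 xy.2)%:E | xy in [set xy : pt * pt | X xy.1 /\ X xy.2]].

Definition mclosure (X : set pt) : set pt :=
  [set x | forall e : R, 0 < e -> exists2 y, X y & dmax x y < e].

Definition is_partition (P : set (set pt)) : Prop :=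
  (forall X, P X -> X !=set0) /\
  (forall X Y, P X -> P Y -> X <> Y -> X `&` Y = set0) /\
  (forall x : pt, exists2 X, P X & X x).

Definition adjacent (X Y : set pt) : Prop := mclosure X `&` mclosure Y !=set0.

Definition adjacent_or_far (P : set (set pt)) : Prop :=
  exists2 eps : R, 0 < eps & forall X Y, P X -> P Y ->
    adjacent X Y \/ (forall x y, X x -> Y y -> eps < dmax x y).

Definition has_clique (P : set (set pt)) (n : nat) : Prop :=
  exists C : 'I_n -> set pt, injective C /\ (forall i, P (C i)) /\
    (forall i j, i != j -> adjacent (C i) (C j)).
End Defs.

(* Lay the grid of mesh eps (the adjacent-or-far constant) over the cube
   [0, (n+1) eps]^d, where (n+1) eps >= D.  Every grid point p gets the label
   of its cell X: the largest i+1 such that X meets the hyperplane x_i = 0, or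
   0 if there is none.  On x_i = 0 the label is > i, and on x_i = (n+1) eps it
   is <> i+1, since a cell of diameter < D cannot meet both hyperplanes.  These
   are the boundary conditions of Kuhn's cubical Sperner lemma, which yields
   d+1 grid points of one simplex of Kuhn's triangulation carrying all the
   labels 0, ..., d.  Their cells are distinct, because the label depends only
   on the cell, and pairwise at distance <= eps, hence adjacent.
   Kuhn's lemma is proved by descending induction on j: the number of fully
   labelled simplices of the face x_0 = ... = x_(j-1) = 0 is odd.  Its parity
   equals that of the number of doors (facets labelled j+1, ..., d); these are
   paired by an involution whose fixed points are the fully labelled simplices
   of the next face. *)

From mathcomp Require Import all_boot all_order all_algebra fingroup perm zify.
From mathcomp Require Import boolp.
Set Implicit Arguments. Unset Strict Implicit. Unset Printing Implicit Defensive.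

Lemma odd_sum_congr (I : finType) (P : pred I) (F G : I -> nat) :
  (forall i, P i -> odd (F i) = odd (G i)) ->
  odd (\sum_(i | P i) F i) = odd (\sum_(i | P i) G i).
Proof.
move=> FG; apply: (big_ind2 (fun a b => odd a = odd b)) => // a a' b b' aa' bb'.
by rewrite !oddD aa' bb'.
Qed.

Lemma odd_card_involution (T : finType) (f : T -> T) (A : {set T}) :
  {in A, forall x, f x \in A} -> {in A, involutive f} ->
  odd #|A| = odd #|[set x in A | f x == x]|.
Proof.
move=> fA fK; have [m] := ubnP #|A|.
elim: m A fA fK => // m IHm A fA fK ltAm.
case: (boolP [exists x in A, f x != x]) => [/exists_inP [x xA fx_x]|]; last first.
  rewrite negb_exists_in => /forall_inP fixA.
  suff -> : [set x in A | f x == x] = A by [].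
  by apply/setP => x; rewrite inE andb_idr // => /fixA; rewrite negbK.
have fxA := fA x xA; have ffx := fK x xA.
have fx_neq_x : (f x == x) = false by exact/negbTE.
set B := A :\ x :\ f x.
have cardA : #|A| = #|B|.+2.
  by rewrite (cardsD1 x A) xA (cardsD1 (f x) (A :\ x)) !inE fx_neq_x fxA.
have fB : {in B, forall y, f y \in B}.
  move=> y; rewrite !inE => /and3P [yfx yx yA]; rewrite fA // andbT.
  apply/andP; split.
    by apply: contraNneq yx => fy_fx; rewrite -(fK y yA) fy_fx ffx.
  by apply: contraNneq yfx => fy_x; rewrite -(fK y yA) fy_x.
have fKB : {in B, involutive f} by move=> y; rewrite !inE => /and3P [_ _ /fK].
rewrite cardA /= negbK (IHm B fB fKB); last by move: ltAm; rewrite cardA; lia.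
suff -> : [set y in B | f y == y] = [set y in A | f y == y] by [].
apply/setP => y; rewrite !inE.
case: (eqVneq y (f x)) => [->|_] /=; first by rewrite ffx eq_sym fx_neq_x andbF.
by case: (eqVneq y x) => [->|_] /=; rewrite ?fx_neq_x ?andbF.
Qed.

Section Doors.
Variables (I L : finType) (g : I -> L) (S : {set L}) (a0 : L).
Hypotheses (a0S : a0 \in S) (card_IS : #|I| = #|S|) (gS : forall k, g k \in S).

Definition doors := [set k | S :\ a0 \subset g @: [set~ k]].

Lemma imsetT_sub : g @: setT \subset S.
Proof. by apply/subsetP => _ /imsetP [x _ ->]. Qed.

Lemma card_doors_onto : S \subset g @: setT -> #|doors| = 1.
Proof.
move=> onto; have imS : g @: setT = S by apply/eqP; rewrite eqEsubset imsetT_sub onto.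
have g_inj : {in setT &, injective g} by apply/imset_injP; rewrite imS cardsT card_IS.
have /imsetP [k0 _ gk0] : a0 \in g @: setT by rewrite imS.
suff -> : doors = [set k0] by rewrite cards1.
apply/setP => k; rewrite !inE; case: (eqVneq k k0) => [->|kk0].
  apply/subsetP => b; rewrite !inE => /andP [ba0]; rewrite -imS => /imsetP [x _ bx].
  by apply/imsetP; exists x; rewrite // !inE; apply: contraNneq ba0 => xk0; rewrite bx xk0 gk0.
apply/negP => /subsetP/(_ (g k)); rewrite !inE gS andbT.
have gk_a0 : g k != a0.
  by apply: contra kk0 => /eqP gk; apply/eqP/g_inj; rewrite ?inE // gk.
move=> /(_ gk_a0)/imsetP [x]; rewrite !inE => xk /g_inj kx.
by rewrite kx ?inE ?eqxx in xk.
Qed.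

Lemma card_doors_not_cover : ~~ (S :\ a0 \subset g @: setT) -> #|doors| = 0.
Proof.
move=> not_cover; apply/eqP; rewrite cards_eq0; apply/eqP/setP => k; rewrite !inE.
by apply: contraNF not_cover => /subset_trans; apply; apply: imsetS; apply: subsetT.
Qed.

Lemma imset_D1_dup (A : {set I}) k k' :
  k' \in A :\ k -> g k = g k' -> g @: A \subset g @: (A :\ k).
Proof.
move=> k'A gkk'; apply/subsetP => _ /imsetP [x xA ->]; apply/imsetP.
case: (eqVneq x k) => [->|xk]; first by exists k'.
by exists x; rewrite // !inE xk.
Qed.

Lemma card_doors_miss :
  ~~ (S \subset g @: setT) -> S :\ a0 \subset g @: setT -> #|doors| = 2.
Proof.
move=> not_onto cover.
have imS : g @: setT = S :\ a0.
  apply/eqP; rewrite eqEsubset cover andbT; apply/subsetP => y yim.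
  rewrite !inE (subsetP imsetT_sub _ yim) andbT; apply: contraNneq not_onto => ya0.
  apply/subsetP => b bS; case: (eqVneq b a0) => [->|ba0]; first by rewrite -ya0.
  by apply: (subsetP cover); rewrite !inE ba0.
have card_im : #|g @: setT| = #|I|.-1 by rewrite imS card_IS (cardsD1 a0 S) a0S.
have /injectivePn [k1 [k2 k12 g12]] : ~~ injectiveb g.
  apply/injectiveP => /(card_imset setT); rewrite card_im cardsT.
  have : 0 < #|I| by rewrite card_IS (cardsD1 a0) a0S.
  lia.
suff -> : doors = [set k1; k2] by rewrite cards2 k12.
apply/setP => k; rewrite /doors !inE -imS.
case: (eqVneq k k1) => [->|kk1] /=.
  by rewrite -setTD; apply: imset_D1_dup g12; rewrite !inE eq_sym k12.
case: (eqVneq k k2) => [->|kk2] /=.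
  by rewrite -setTD; apply: imset_D1_dup (esym g12); rewrite !inE k12.
(* A third door k would leave #|I| - 2 indices covering the #|I| - 1 values. *)
apply/negP => /subset_trans/(_ (imset_D1_dup (k := k1) _ g12)).
rewrite !inE (eq_sym k2) k12 (eq_sym k2) kk2 => /(_ isT)/subset_leq_card.
move/leq_trans/(_ (leq_imset_card _ _)); rewrite card_im.
have := cardsD1 k1 [set~ k]; rewrite !inE (eq_sym k1) kk1 cardsC1; lia.
Qed.

Lemma odd_card_doors : odd #|doors| = (S \subset g @: setT).
Proof.
case: (boolP (S \subset g @: setT)) => [/card_doors_onto -> //|not_onto].
case: (boolP (S :\ a0 \subset g @: setT)) => [cover|/card_doors_not_cover -> //].
by rewrite card_doors_miss.
Qed.

End Doors.

Definition in_cube (N d : nat) (p : 'I_d -> nat) := forall i, p i <= N.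

Section Kuhn.
Variables (m n : nat).
Local Notation d := m.+1.
Variable lab : ('I_d -> nat) -> nat.
Hypothesis lab_le : forall p, in_cube n.+1 p -> lab p <= d.
Hypothesis lab_gt_of_coord0 : forall p (i : 'I_d), in_cube n.+1 p -> p i = 0 -> i < lab p.
Hypothesis lab_neq_of_coord_top :
  forall p (i : 'I_d), in_cube n.+1 p -> p i = n.+1 -> lab p != i.+1.

Local Notation base := {ffun 'I_d -> 'I_n.+1}.

(* [(v, t)] is the simplex of Kuhn's triangulation of [[0, n+1]^d] whose
   [k]-th vertex adds 1 to the [k] coordinates of [v] of largest [t]-rank. *)
Definition simplex := (base * {perm 'I_d})%type.

Definition vertex (s : simplex) (k : nat) : 'I_d -> nat :=
  fun i => s.1 i + (d - k <= s.2 i).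

(* If [in_face j s], the vertices [0, ..., d - j] of [s] span a simplex of the face
   [x_0 = ... = x_(j-1) = 0]. *)
Definition in_face (j : nat) (s : simplex) :=
  [forall i : 'I_d, (i < j) ==> (s.1 i == 0 :> nat) && (s.2 i == i)].

Definition vertex_label j (s : simplex) (k : 'I_(d - j).+1) : 'I_d.+1 :=
  inord (lab (vertex s k)).
Arguments vertex_label : clear implicits.

Definition labels_from (j : nat) : {set 'I_d.+1} := [set a : 'I_d.+1 | j <= a].

Definition fully_labelled j s := labels_from j \subset vertex_label j s @: setT.

Definition door j s (k : 'I_(d - j).+1) :=
  labels_from j.+1 \subset vertex_label j s @: [set~ k].
Arguments door : clear implicits.

Lemma in_faceP j (s : simplex) :
  reflect (forall i : 'I_d, i < j -> s.1 i = 0 :> nat /\ s.2 i = i) (in_face j s).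
Proof.
apply: (iffP forallP) => [face i ij|face i].
  by move/implyP/(_ ij)/andP: (face i) => [/eqP ? /eqP].
by apply/implyP => /face [-> ->]; rewrite !eqxx.
Qed.

Lemma in_faceW j (s : simplex) : in_face j.+1 s -> in_face j s.
Proof. by move=> /in_faceP face; apply/in_faceP => i ij; apply/face/ltnW. Qed.

Lemma vertex_in_cube (s : simplex) k : in_cube n.+1 (vertex s k).
Proof.
by move=> i; rewrite /vertex; have := ltn_ord (s.1 i); case: (d - k <= s.2 i) => /=; lia.
Qed.

Lemma lab_vertex_range j (s : simplex) k :
  j <= d -> in_face j s -> k <= d - j -> j <= lab (vertex s k) <= d.
Proof.
move=> jd /in_faceP face kj; rewrite lab_le ?andbT; last exact: vertex_in_cube.
case: j jd face kj => // j jd face kj.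
have [s1j s2j] := face (Ordinal jd) (ltnSn j).
apply: (lab_gt_of_coord0 (i := Ordinal jd) (vertex_in_cube s k)).
by rewrite /vertex s1j s2j /=; lia.
Qed.

Lemma vertex_labelE j s k : vertex_label j s k = lab (vertex s k) :> nat.
Proof. by rewrite inordK // ltnS lab_le //; apply: vertex_in_cube. Qed.

Lemma card_labels_from j : j <= d -> #|labels_from j| = (d - j).+1.
Proof.
move=> jd; have shift_lt (k : 'I_(d - j).+1) : j + k < d.+1 by have := ltn_ord k; lia.
have shift_inj : injective (fun k : 'I_(d - j).+1 => inord (j + k) : 'I_d.+1).
  by move=> k k' /(congr1 val); rewrite /= !inordK ?shift_lt // => /addnI/val_inj.
rewrite -[RHS]card_ord -cardsT -(card_imset _ shift_inj).
apply: eq_card => a; rewrite inE; apply/idP/imsetP => [ja|[k _ ->]]; last by rewrite inordK //; lia.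
have ak : a - j < (d - j).+1 by have := ltn_ord a; lia.
by exists (Ordinal ak); rewrite //; apply/val_inj; rewrite /= inordK; lia.
Qed.

Lemma labels_fromD1 j : j <= d -> labels_from j :\ inord j = labels_from j.+1.
Proof. by move=> jd; apply/setP => a; rewrite !inE -val_eqE /= inordK //; lia. Qed.

Lemma odd_card_doors_full j s : j <= d -> in_face j s ->
  odd #|[set k | door j s k]| = fully_labelled j s.
Proof.
move=> jd s_face.
have j_labelled : inord j \in labels_from j by rewrite inE inordK.
have card_eq : #|'I_(d - j).+1| = #|labels_from j| by rewrite card_ord card_labels_from.
have labS k : vertex_label j s k \in labels_from j.
  by rewrite inE vertex_labelE; case/andP: (lab_vertex_range jd s_face (leq_ord k)).
by rewrite /fully_labelled -(odd_card_doors j_labelled card_eq labS) /doors labels_fromD1.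
Qed.

Lemma doorP j s (k : 'I_(d - j).+1) :
  reflect (forall a, j < a <= d ->
             exists k', [/\ k' <= d - j, k' != k :> nat & lab (vertex s k') = a])
    (door j s k).
Proof.
apply: (iffP subsetP) => [labelled a /andP [ja ad]|labelled b].
  have /labelled/imsetP [k'] : inord a \in labels_from j.+1 by rewrite inE inordK.
  rewrite !inE => k'k /(congr1 val); rewrite /= inordK // vertex_labelE => ->.
  by exists k'; rewrite leq_ord.
rewrite inE => jb; have [|k' [k'j k'k lab_k']] := labelled b; first by rewrite jb leq_ord.
apply/imsetP; exists (Ordinal (k'j : k' < (d - j).+1)); first by rewrite !inE -val_eqE.
by apply/val_inj; rewrite /= vertex_labelE.
Qed.

Lemma fully_labelledP j s :
  reflect (forall a, j <= a <= d -> exists2 k, k <= d - j & lab (vertex s k) = a)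
    (fully_labelled j s).
Proof.
apply: (iffP subsetP) => [labelled a /andP [ja ad]|labelled b].
  have /labelled/imsetP [k _] : inord a \in labels_from j by rewrite inE inordK.
  move/(congr1 val); rewrite /= inordK // vertex_labelE => ->.
  by exists k; first exact: leq_ord.
rewrite inE => jb; have [|k kj lab_k] := labelled b; first by rewrite jb leq_ord.
apply/imsetP; exists (Ordinal (kj : k < (d - j).+1)) => //.
by apply/val_inj; rewrite /= vertex_labelE.
Qed.

Lemma door_last_full j s : j <= m -> door j s ord_max = fully_labelled j.+1 s.
Proof.
move=> jm; apply/doorP/fully_labelledP => labelled a ja.
  have [|k [kj kmax lab_k]] := labelled a; first by lia.
  by exists k => //; move: kmax; rewrite /=; lia.
have [|k kj lab_k] := labelled a; first by lia.
by exists k; split => //=; lia.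
Qed.

Definition rot_fun (j : nat) (x : 'I_d) : 'I_d :=
  if (j <= x) && (x < m) then inord x.+1
  else if (x == m :> nat) && (j <= m) then inord j else x.

Lemma rot_funE j x : val (rot_fun j x) =
  if (j <= x) && (x < m) then x.+1 else if (x == m :> nat) && (j <= m) then j else x.
Proof.
rewrite /rot_fun; case: ifP => [jxm|_]; first by rewrite /= inordK //; lia.
by case: ifP => // /andP [_ jm]; rewrite /= inordK.
Qed.

Lemma rot_fun_inj j : injective (rot_fun j).
Proof.
move=> x y /(congr1 val); rewrite !rot_funE => xy; apply/val_inj => /=.
by have := ltn_ord x; have := ltn_ord y; move: xy; repeat case: ifP => ?; lia.
Qed.

Definition rot j : {perm 'I_d} := perm (@rot_fun_inj j).

Lemma rotE j x : val (rot j x) =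
  if (j <= x) && (x < m) then x.+1 else if (x == m :> nat) && (j <= m) then j else x.
Proof. by rewrite permE rot_funE. Qed.

Lemma rot_lt j (i : 'I_d) : i < j -> rot j i = i.
Proof. by move=> ij; apply/val_inj; rewrite rotE /=; repeat case: ifP => ?; lia. Qed.

Lemma rotV_lt j (i : 'I_d) : i < j -> ((rot j)^-1)%g i = i.
Proof. by move=> ij; rewrite -{1}(rot_lt ij) permK. Qed.

Lemma rot_last j : j <= m -> rot j (inord m) = inord j.
Proof. by move=> jm; apply/val_inj; rewrite rotE /= !inordK //; repeat case: ifP => ?; lia. Qed.

Lemma rotV_first j : j <= m -> ((rot j)^-1)%g (inord j) = inord m.
Proof. by move=> jm; rewrite -(rot_last jm) permK. Qed.

Definition swap_at (k : nat) : {perm 'I_d} := tperm (inord (d - k)) (inord (d - k.+1)).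

Definition incr (v : base) (a : 'I_d) : base :=
  [ffun i => if i == a then inord (v i).+1 else v i].

Definition decr (v : base) (a : 'I_d) : base :=
  [ffun i => if i == a then inord (v i).-1 else v i].

Lemma incrK (v : base) a : v a < n -> decr (incr v a) a = v.
Proof.
move=> va; apply/ffunP => i; rewrite !ffunE; case: eqVneq => [->|//].
by apply/val_inj; rewrite /= !inordK //; have := ltn_ord (v a); lia.
Qed.

Lemma decrK (v : base) a : 0 < v a -> incr (decr v a) a = v.
Proof.
move=> va; apply/ffunP => i; rewrite !ffunE; case: eqVneq => [->|//].
by apply/val_inj; rewrite /= !inordK //; have := ltn_ord (v a); lia.
Qed.

Lemma vertex_swap (v : base) (t : {perm 'I_d}) k k' :
  0 < k < d -> k' != k -> vertex (v, (t * swap_at k)%g) k' = vertex (v, t) k'.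
Proof.
move=> /andP [k0 kd] k'k; apply: funext => i; rewrite /vertex /= permM /swap_at.
by case: tpermP => [->|->|//]; rewrite /= !inordK //; lia.
Qed.

Lemma vertex_incr j (v : base) (t : {perm 'I_d}) k : j <= m -> k < d - j ->
  let a := (t^-1)%g (inord m) in
  v a < n -> vertex (incr v a, (t * rot j)%g) k = vertex (v, t) k.+1.
Proof.
move=> jm kj a va; apply: funext => i; rewrite /vertex /= ffunE permM.
case: (eqVneq i a) => [->|ia]; first by rewrite permKV rot_last // !inordK //; lia.
have ti_m : t i != m :> nat.
  apply: contra ia => /eqP ti; apply/eqP.
  by rewrite /a (_ : inord m = t i) ?permK //; apply/val_inj; rewrite /= inordK.
by rewrite rotE; have := ltn_ord (t i); move: ti_m; repeat case: ifP => ?; lia.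
Qed.

(* The involution of the door-to-door walk in face [j]: a simplex with a
   marked vertex [k] goes to the neighbouring simplex across the facet
   opposite [k], and to itself when that facet lies on the boundary of
   the face. *)
Definition pivot (j : nat) (p : simplex * 'I_(d - j).+1) : simplex * 'I_(d - j).+1 :=
  let: ((v, t), k) := p in
  if 0 < k < d - j then ((v, (t * swap_at k)%g), k)
  else if k == 0 :> nat then
    let a := (t^-1)%g (inord m) in
    if v a < n then ((incr v a, (t * rot j)%g), ord_max) else p
  else
    let c := (t^-1)%g (inord j) in
    if 0 < v c then ((decr v c, (t * (rot j)^-1)%g), ord0) else p.
Arguments pivot : clear implicits.

Variant face_index_spec (j : nat) (k : 'I_(d - j).+1) : Prop :=
  | FaceIndexFirst of k = 0 :> nat
  | FaceIndexMid of 0 < k < d - j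
  | FaceIndexLast of k = d - j :> nat.

Lemma face_indexP j (k : 'I_(d - j).+1) : face_index_spec k.
Proof.
case: (posnP k) => [|k0]; first by constructor.
by case: (ltnP k (d - j)) => kj; constructor; [rewrite k0|have := ltn_ord k; lia].
Qed.

Lemma pivot_mid j (v : base) (t : {perm 'I_d}) (k : 'I_(d - j).+1) : 0 < k < d - j ->
  pivot j ((v, t), k) = ((v, (t * swap_at k)%g), k).
Proof. by rewrite /pivot => ->. Qed.

Lemma pivot_first j (v : base) (t : {perm 'I_d}) (k : 'I_(d - j).+1) : k = 0 :> nat ->
  pivot j ((v, t), k) = let a := (t^-1)%g (inord m) in
    if v a < n then ((incr v a, (t * rot j)%g), ord_max) else ((v, t), k).
Proof. by rewrite /pivot => ->. Qed.

Lemma pivot_last j (v : base) (t : {perm 'I_d}) (k : 'I_(d - j).+1) : j <= m -> k = d - j :> nat ->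
  pivot j ((v, t), k) = let c := (t^-1)%g (inord j) in
    if 0 < v c then ((decr v c, (t * (rot j)^-1)%g), ord0) else ((v, t), k).
Proof. by move=> jm kj; rewrite /pivot kj ltnn andbF; case: eqP => //; lia. Qed.

Lemma pivotK j p : j <= m -> pivot j (pivot j p) = p.
Proof.
case: p => [[v t] k] jm; case: (face_indexP k) => [k0|kk|kj].
- rewrite pivot_first //=; case: ifP => va; last by rewrite pivot_first //= va.
  rewrite pivot_last //= invMg permM rotV_first // ffunE eqxx inordK; last by rewrite ltnS va.
  by rewrite ltn0Sn incrK // mulgK; congr (_, _); apply/val_inj.
- by rewrite !pivot_mid // -mulgA tperm2 mulg1.
- rewrite pivot_last //=; case: ifP => vc; last by rewrite pivot_last //= vc.
  rewrite pivot_first //= invMg invgK permM rot_last // ffunE eqxx inordK; last first.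
    exact: leq_ltn_trans (leq_pred _) (ltn_ord _).
  have -> : (v (t^-1 (inord j))%g).-1 < n by rewrite -ltnS prednK // ltn_ord.
  by rewrite decrK // mulgKV; congr (_, _); apply/val_inj; rewrite /= kj.
Qed.

Lemma in_face_invp_ge j (v : base) (t : {perm 'I_d}) x : j <= x < d ->
  in_face j (v, t) -> j <= (t^-1)%g (inord x).
Proof.
move=> /andP [jx xd] /in_faceP face; case: (ltnP ((t^-1)%g (inord x)) j) => // lt_j.
by have [_] := face _ lt_j; rewrite /= permKV => /(congr1 val); rewrite /= inordK //; lia.
Qed.

Lemma pivot_in_face j p : j <= m -> in_face j p.1 -> in_face j (pivot j p).1.
Proof.
case: p => [[v t] k] jm face; have /in_faceP face' := face.
case: (face_indexP k) => [k0|kk|kj].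
- rewrite pivot_first //=; case: ifP => va //; apply/in_faceP => i ij /=.
  have ja : j <= (t^-1)%g (inord m) by apply: in_face_invp_ge face; rewrite jm /=.
  have [/= v0 ti] := face' i ij; rewrite ffunE permM ti rot_lt // ifN //.
  by apply: contraTneq ij => ->; rewrite -leqNgt.
- rewrite pivot_mid //=; apply/in_faceP => i ij /=; have [/= v0 ti] := face' i ij.
  by rewrite permM ti /swap_at tpermD // -val_eqE /= inordK //; lia.
- rewrite pivot_last //=; case: ifP => vc //; apply/in_faceP => i ij /=.
  have jc : j <= (t^-1)%g (inord j) by apply: in_face_invp_ge face; rewrite leqnn /=; lia.
  have [/= v0 ti] := face' i ij; rewrite ffunE permM ti rotV_lt // ifN //.
  by apply: contraTneq ij => ->; rewrite -leqNgt.
Qed.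

Lemma door_swap j (v : base) (t : {perm 'I_d}) (k : 'I_(d - j).+1) :
  0 < k < d - j -> door j (v, (t * swap_at k)%g) k = door j (v, t) k.
Proof.
move=> kk; rewrite /door (eq_in_imset (g := vertex_label j (v, t))) // => k'.
by rewrite !inE => k'k; rewrite /vertex_label vertex_swap //; lia.
Qed.

Lemma door_incr j (v : base) (t : {perm 'I_d}) (k : 'I_(d - j).+1) :
  j <= m -> k = 0 :> nat -> let a := (t^-1)%g (inord m) in v a < n ->
  door j (incr v a, (t * rot j)%g) ord_max = door j (v, t) k.
Proof.
move=> jm k0 a va; apply/doorP/doorP => door_k b jb; have [k' [k'j k'k lab_k']] := door_k b jb.
  exists k'.+1; rewrite k0 -(vertex_incr (j := j)) //; last by move: k'k => /=; lia.
  by split => //; move: k'k => /=; lia.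
have k'0 : 0 < k' by move: k'k; rewrite k0 lt0n.
exists k'.-1; rewrite (vertex_incr (j := j)) ?prednK //.
by split => //=; lia.
Qed.

Lemma pivot_door j p : j <= m -> door j p.1 p.2 -> door j (pivot j p).1 (pivot j p).2.
Proof.
case: p => [[v t] k] jm door_k; case: (face_indexP k) => [k0|kk|kj].
- by rewrite pivot_first //=; case: ifP => va //=; rewrite (door_incr (k := k)).
- by rewrite pivot_mid //= door_swap.
- rewrite pivot_last //=; case: ifP => vc //=.
  set c := (t^-1)%g (inord j) in vc *.
  have a_c : ((t * (rot j)^-1)^-1)%g (inord m) = c by rewrite invMg invgK permM rot_last.
  have vc_lt : decr v c c < n.
    rewrite ffunE eqxx inordK; first by rewrite -ltnS prednK // ltn_ord.
    exact: leq_ltn_trans (leq_pred _) (ltn_ord _).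
  rewrite -(door_incr (k := ord0)) // a_c ?decrK ?mulgKV //.
  by rewrite (_ : ord_max = k) //; apply/val_inj; rewrite /= kj.
Qed.

Lemma in_faceS j (v : base) (t : {perm 'I_d}) : j <= m -> in_face j (v, t) ->
  let c := (t^-1)%g (inord j) in in_face j.+1 (v, t) = (c == j :> nat) && (v c == 0 :> nat).
Proof.
move=> jm /in_faceP face c; apply/in_faceP/andP => [face'|[/eqP cj /eqP vc0] i ij].
  have jj : (inord j : 'I_d) < j.+1 by rewrite inordK.
  have [/= vj tj] := face' _ jj.
  have -> : c = inord j by rewrite /c -{1}tj permK.
  by rewrite vj inordK.
case: (ltnP i j) => [/face //|ji].
have -> : i = c by apply/val_inj => /=; rewrite cj; lia.
by split => //=; apply/val_inj; rewrite /= /c permKV inordK.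
Qed.

Lemma pivot_mid_neq j (v : base) (t : {perm 'I_d}) (k : 'I_(d - j).+1) :
  0 < k < d - j -> pivot j ((v, t), k) != ((v, t), k).
Proof.
move=> kk; rewrite pivot_mid //; apply/eqP => -[/(congr1 (mulg t^-1))]; rewrite mulKg mulVg.
move/permP/(_ (inord (d - k))); rewrite /swap_at tpermL perm1 => /(congr1 val).
by rewrite /= !inordK; lia.
Qed.

(* If [v a = n] for [a = t^-1 m], the vertex of the door labelled [a + 1] would lie
   on the facet [x_a = n + 1]. *)
Lemma door_first_below_top j (v : base) (t : {perm 'I_d}) (k : 'I_(d - j).+1) :
  j <= m -> k = 0 :> nat -> in_face j (v, t) -> door j (v, t) k ->
  v ((t^-1)%g (inord m)) < n.
Proof.
move=> jm k0 face /doorP door_k; set a := (t^-1)%g (inord m).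
have ja : j <= a by apply: in_face_invp_ge face; rewrite jm /=.
rewrite ltn_neqAle -ltnS ltn_ord andbT; apply/negP => /eqP va.
have [|k' [k'j k'k lab_k']] := door_k a.+1; first by have := ltn_ord a; lia.
have /(lab_neq_of_coord_top (vertex_in_cube _ _)) : vertex (v, t) k' a = n.+1.
  by rewrite /vertex /= va /a permKV inordK //; move: k'k; rewrite k0; lia.
by rewrite lab_k' eqxx.
Qed.

(* If [c > j], the vertex of the door labelled [j + 1] would lie on [x_c = 0]. *)
Lemma door_last_invp j (v : base) (t : {perm 'I_d}) (k : 'I_(d - j).+1) :
  j <= m -> k = d - j :> nat -> in_face j (v, t) -> door j (v, t) k ->
  let c := (t^-1)%g (inord j) in v c = 0 :> nat -> c = j :> nat.
Proof.
move=> jm kj face /doorP door_k c vc.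
have jc : j <= c by apply: in_face_invp_ge face; rewrite leqnn /=; lia.
apply/eqP; rewrite eqn_leq jc andbT; apply/negP => cj.
have [|k' [k'j k'k lab_k']] := door_k j.+1; first by lia.
have /(lab_gt_of_coord0 (vertex_in_cube _ _)) : vertex (v, t) k' c = 0.
  by rewrite /vertex /= vc /c permKV inordK; [move: k'k; rewrite kj; lia|lia].
by rewrite lab_k'; lia.
Qed.

Lemma pivot_fixed j (v : base) (t : {perm 'I_d}) (k : 'I_(d - j).+1) :
  j <= m -> in_face j (v, t) -> door j (v, t) k ->
  (pivot j ((v, t), k) == ((v, t), k)) = (k == ord_max) && in_face j.+1 (v, t).
Proof.
move=> jm face door_k; case: (face_indexP k) => [k0|kk|kj].
- have not_max : (k == ord_max) = false by rewrite -val_eqE /= k0; lia.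
  rewrite not_max pivot_first //= (door_first_below_top jm k0 face door_k).
  by apply/negbTE; rewrite !xpair_eqE (eq_sym ord_max) not_max andbF.
- rewrite (negbTE (pivot_mid_neq _ _ kk)); apply/esym/negbTE.
  by rewrite -val_eqE /=; lia.
- have -> : k == ord_max by rewrite -val_eqE /= kj.
  rewrite pivot_last //= in_faceS //; set c := (t^-1)%g (inord j).
  case: posnP => vc; first by rewrite eqxx (door_last_invp jm kj face door_k) ?eqxx.
  rewrite andbF; apply/negbTE; rewrite !xpair_eqE.
  by apply/andP => -[_ /eqP/(congr1 val)]; rewrite /= kj; lia.
Qed.

Definition door_pairs j := [set p : simplex * 'I_(d - j).+1 | in_face j p.1 && door j p.1 p.2].

Definition full_simplices j := [set s : simplex | in_face j s && fully_labelled j s].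

Lemma card_door_pairs j : #|door_pairs j| = \sum_(s | in_face j s) #|[set k | door j s k]|.
Proof.
rewrite -sum1_card; under [RHS]eq_bigr do rewrite -sum1_card.
by rewrite pair_big_dep; apply: eq_bigl => p; rewrite !inE.
Qed.

Lemma odd_card_full_simplices j : j <= m ->
  odd #|full_simplices j| = odd #|door_pairs j|.
Proof.
move=> jm; rewrite card_door_pairs -sum1_card.
rewrite (eq_bigl (fun s => in_face j s && fully_labelled j s)) => [|s]; last by rewrite inE.
rewrite big_mkcondr /=; apply: odd_sum_congr => s face.
by rewrite (odd_card_doors_full (leqW jm) face); case: fully_labelled.
Qed.

Lemma fixed_door_pairs j : j <= m ->
  [set p in door_pairs j | pivot j p == p] = [set (s, ord_max) | s in full_simplices j.+1].
Proof.
move=> jm; apply/setP => -[[v t] k]; rewrite !inE /=; apply/idP/imsetP => [|[s]].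
  case/andP=> /andP [face door_k]; rewrite pivot_fixed // => /andP [/eqP k_max face'].
  exists (v, t); last by rewrite k_max.
  by rewrite inE face' -door_last_full // -k_max.
rewrite inE => /andP [face' labelled] [vts ->]; subst s; have face := in_faceW face'.
have door_max : door j (v, t) ord_max by rewrite door_last_full.
by rewrite face door_max pivot_fixed // eqxx.
Qed.

Lemma odd_full_simplicesS j : j <= m ->
  odd #|full_simplices j| = odd #|full_simplices j.+1|.
Proof.
move=> jm; rewrite odd_card_full_simplices // (odd_card_involution (f := pivot j)).
- by rewrite fixed_door_pairs // card_imset // => s s' [].
- by move=> [s k]; rewrite !inE => /andP [face door_k]; rewrite pivot_in_face // pivot_door.
- by move=> p _; apply: pivotK.
Qed.

Lemma odd_full_simplices_last : odd #|full_simplices d|.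
Proof.
pose s0 : simplex := ([ffun => ord0], 1%g).
suff -> : full_simplices d = [set s0] by rewrite cards1.
apply/setP => s; rewrite !inE; apply/idP/eqP => [/andP [/in_faceP face _]|->].
  case: s face => v t face; congr (_, _).
    by apply/ffunP => i; rewrite ffunE; apply/val_inj; case: (face i (ltn_ord i)).
  by apply/permP => i; rewrite perm1; case: (face i (ltn_ord i)).
apply/andP; split; first by apply/in_faceP => i _; rewrite /= ffunE perm1.
apply/fully_labelledP => a da; exists 0 => //.
have -> : vertex s0 0 = fun _ => 0.
  by apply: funext => i; rewrite /vertex /= ffunE perm1 subn0 leqNgt ltn_ord.
have := lab_le (p := fun _ => 0) (fun _ => leq0n _).
have := lab_gt_of_coord0 (i := ord_max) (fun _ => leq0n _) erefl.
rewrite /=; lia.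
Qed.

Lemma odd_full_simplices j : j <= d -> odd #|full_simplices j|.
Proof.
move=> jd; rewrite -(subKn jd); elim: (d - j) (leq_subr j d) => [|i IHi] id.
  by rewrite subn0 odd_full_simplices_last.
rewrite odd_full_simplicesS; last by lia.
by rewrite (_ : (d - i.+1).+1 = d - i) ?IHi //; lia.
Qed.

Lemma cube_spernerS : exists w : 'I_d.+1 -> ('I_d -> nat),
  [/\ forall a, in_cube n.+1 (w a), forall a b i, w a i <= (w b i).+1 & forall a, lab (w a) = a].
Proof.
have /set0Pn [s] : full_simplices 0 != set0.
  by rewrite -card_gt0 lt0n; case: #|_| (odd_full_simplices (leq0n d)).
rewrite inE => /andP [_ /fully_labelledP labelled].
have /fin_all_exists [k lab_k] : forall a : 'I_d.+1, exists k : 'I_d.+1, lab (vertex s k) = a.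
  move=> a; have [|k kd lab_k] := labelled a; first by rewrite leq_ord.
  by exists (Ordinal (kd : k < d.+1)).
exists (fun a => vertex s (k a)); split => // [a|a b i]; first exact: vertex_in_cube.
by rewrite /vertex; case: (d - k a <= s.2 i); case: (d - k b <= s.2 i) => /=; lia.
Qed.

End Kuhn.

Lemma cube_sperner d n (lab : ('I_d -> nat) -> nat) :
  (forall p, in_cube n.+1 p -> lab p <= d) ->
  (forall p (i : 'I_d), in_cube n.+1 p -> p i = 0 -> i < lab p) ->
  (forall p (i : 'I_d), in_cube n.+1 p -> p i = n.+1 -> lab p != i.+1) ->
  exists w : 'I_d.+1 -> ('I_d -> nat), [/\ forall a, in_cube n.+1 (w a),
    forall a b i, w a i <= (w b i).+1 & forall a, lab (w a) = a].
Proof.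
case: d lab => [|m] lab lab_le lab_gt lab_neq; last exact: cube_spernerS.
exists (fun _ _ => 0); split => [a []|a b []|a] //; rewrite (ord1 a).
by apply/eqP; rewrite -leqn0 lab_le.
Qed.

From mathcomp Require Import classical_sets reals ereal lra.
Import Order.TTheory GRing.Theory Num.Theory.
Local Open Scope classical_set_scope.
Local Open Scope ring_scope.

Section Dmax.
Variables (R : realType) (d : nat).
Implicit Types (x y : 'I_d -> R) (X Y : set ('I_d -> R)).

Lemma le_dmax x y i : `|x i - y i| <= dmax x y.
Proof. exact: le_bigmax. Qed.

Lemma dmax_le x y c : 0 <= c -> (forall i, `|x i - y i| <= c) -> dmax x y <= c.
Proof. by move=> c0 xy; apply: bigmax_le. Qed.

Lemma dmax_lt_diam X x y D : (diam X < D%:E)%E -> X x -> X y -> dmax x y < D.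
Proof.
move=> diamX Xx Xy; rewrite -lte_fin; apply: le_lt_trans diamX.
by apply: ereal_sup_ubound; exists (x, y).
Qed.

Lemma adjacent_of_close (P : set (set ('I_d -> R))) eps X Y x y :
  (forall X Y, P X -> P Y -> adjacent X Y \/ (forall x y, X x -> Y y -> eps < dmax x y)) ->
  P X -> P Y -> X x -> Y y -> dmax x y <= eps -> adjacent X Y.
Proof.
move=> far PX PY Xx Yy xy; have [//|/(_ x y Xx Yy)] := far X Y PX PY.
by rewrite ltNge xy.
Qed.

Definition grid_point (h : R) (p : 'I_d -> nat) : 'I_d -> R := fun i => h * (p i)%:R.

Lemma dmax_grid_point_le h p q : 0 <= h ->
  (forall i, p i <= (q i).+1 /\ q i <= (p i).+1)%N ->
  dmax (grid_point h p) (grid_point h q) <= h.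
Proof.
move=> h0 pq; apply: dmax_le => // i; rewrite -mulrBr normrM ger0_norm // ler_piMr //.
have [] := pq i; rewrite -(ler_nat R) -[(q i <= _)%N](ler_nat R) -!natr1 => pqi qpi.
by rewrite ler_distl; apply/andP; split; lra.
Qed.

End Dmax.

Section CellLabel.
Variables (R : realType) (d : nat).
Implicit Types (X : set ('I_d -> R)) (x : 'I_d -> R) (i : 'I_d).

Definition cell_label X : nat := \max_(i < d | `[< exists2 x, X x & x i = 0 >]) i.+1.

Lemma cell_label_le X : (cell_label X <= d)%N.
Proof. by apply/bigmax_leqP => i _; apply: ltn_ord. Qed.

Lemma cell_label_gt X x i : X x -> x i = 0 -> (i < cell_label X)%N.
Proof.
by move=> Xx xi0; apply: (@leq_bigmax_cond _ _ (fun i : 'I_d => i.+1)); apply/asboolP; exists x.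
Qed.

Lemma cell_labelS X i : cell_label X = i.+1 -> exists2 x, X x & x i = 0.
Proof.
rewrite /cell_label; case: (pickP (fun j : 'I_d => `[< exists2 x, X x & x j = 0 >])).
  move=> j0 Xj0; rewrite (bigop.bigmax_eq_arg j0) //.
  by case: arg_maxnP => // j /asboolP Xj _ [/val_inj <-].
by move=> none; rewrite big_pred0.
Qed.

End CellLabel.
Arguments cell_label {R d} X.

Section Cells.
Variables (R : realType) (d : nat) (P : set (set ('I_d -> R))).
Hypothesis P_cover : forall x, exists2 X, P X & X x.

Definition cell x : set ('I_d -> R) := s2val (cid2 (P_cover x)).

Lemma cell_in_partition x : P (cell x).
Proof. exact: s2valP (cid2 (P_cover x)). Qed.

Lemma cell_mem x : cell x x.
Proof. exact: s2valP' (cid2 (P_cover x)). Qed.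

Lemma grid_label_neq_top D h n p i :
  (forall X, P X -> diam X < D%:E)%E -> D <= h * n.+1%:R -> p i = n.+1 ->
  cell_label (cell (grid_point h p)) != i.+1.
Proof.
move=> diamP Dn pi; apply/eqP => /cell_labelS [x Xx xi0].
have := dmax_lt_diam (diamP _ (cell_in_partition _)) Xx (cell_mem (grid_point h p)).
apply/negP; rewrite -leNgt; apply: le_trans Dn (le_trans _ (le_dmax _ _ i)).
by rewrite xi0 /grid_point pi sub0r normrN ler_norm.
Qed.

End Cells.

Theorem mainTheorem14 (R : realType) (d : nat) (P : set (set ('I_d -> R))) :
  is_partition P -> adjacent_or_far P ->
  (exists2 D : R, 0 < D & forall X, P X -> (diam X < D%:E)%E) ->
  has_clique P d.+1.
Proof.
move=> [_ [_ P_cover]] [eps eps0 far] [D D0 diamP].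
pose n := Num.truncn (D / eps).
have Dn : D <= eps * n.+1%:R by rewrite mulrC -ler_pdivrMr // ltW // truncnS_gt.
pose C p := cell P_cover (grid_point eps p).
have C_label_gt (p : 'I_d -> nat) (i : 'I_d) : p i = 0%N -> (i < cell_label (C p))%N.
  by move=> pi0; apply: cell_label_gt (cell_mem _ _) _; rewrite /grid_point pi0 mulr0.
have [w [_ w_near w_lab]] := cube_sperner (lab := fun p => cell_label (C p))
  (fun p _ => cell_label_le _) (fun p i _ => C_label_gt p i)
  (fun p i _ => grid_label_neq_top P_cover diamP Dn).
exists (fun a => C (w a)); split; [|split].
- by move=> a b /(congr1 cell_label); rewrite !w_lab => /val_inj.
- by move=> a; apply: (cell_in_partition P_cover).
- move=> a b _; apply: (adjacent_of_close far (cell_in_partition P_cover _)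
    (cell_in_partition P_cover _) (cell_mem P_cover _) (cell_mem P_cover _)).
  by apply: dmax_grid_point_le; [apply: ltW | move=> i; rewrite !w_near].
Qed.
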